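(* Let $v\ge2$ and $M,N\in{\cal I}_v$. Write $N=N_1+N_2$ with $N_1=\beta M$, $N_2\perp M$, and $M=M_1+M_2$ with $M_1=\alpha N$, $M_2\perp N$, where $\alpha,\beta\in\mathbb R$ and orthogonality is with respect to $(x,y)=\mathrm{Re}(xy^* )$. Then $\{e^M,e^N\}=0$ if and only if either ($|N_2|=\pi/2+\pi l$, $N_1=0$ and $|M|=\pi/2+\pi k$) or ($|M_2|=\pi/2+\pi k$, $M_1=0$ and $|N|=\pi/2+\pi l$) for some integers $l,k\ge0$.
   Context: ${\cal A}_v$ is the real Cayley-Dickson algebra of dimension $2^v$, $z^*$ its conjugation, $\mathrm{Re}(z)=(z+z^* )/2$, $|z|=(zz^* )^{1/2}$, ${\cal I}_v=\{z:\mathrm{Re}(z)=0\}$. For $M\in{\cal I}_v$, $e^M=\cos|M|+\frac{\sin|M|}{|M|}M$. $\{a,b\}:=ab+ba$. *)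

From Stdlib Require Import Reals.
Open Scope R_scope.

(* The real Cayley-Dickson algebra A_v of dimension 2^v:
   A_0 = R, A_{v+1} = A_v x A_v with
   (a,b)(c,d) = (ac - conj(d) b, d a + b conj(c)),
   conj(a,b) = (conj a, -b). *)
Fixpoint CD (v : nat) : Type :=
  match v with O => R | S w => (CD w * CD w)%type end.

Fixpoint cd_add (v : nat) : CD v -> CD v -> CD v :=
  match v return CD v -> CD v -> CD v with
  | O => Rplus
  | S w => fun x y => (cd_add w (fst x) (fst y), cd_add w (snd x) (snd y))
  end.

Fixpoint cd_opp (v : nat) : CD v -> CD v :=
  match v return CD v -> CD v with
  | O => Ropp
  | S w => fun x => (cd_opp w (fst x), cd_opp w (snd x))
  end.

Fixpoint cd_conj (v : nat) : CD v -> CD v :=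
  match v return CD v -> CD v with
  | O => fun x => x
  | S w => fun x => (cd_conj w (fst x), cd_opp w (snd x))
  end.

Fixpoint cd_mul (v : nat) : CD v -> CD v -> CD v :=
  match v return CD v -> CD v -> CD v with
  | O => Rmult
  | S w => fun x y =>
      (cd_add w (cd_mul w (fst x) (fst y))
                (cd_opp w (cd_mul w (cd_conj w (snd y)) (snd x))),
       cd_add w (cd_mul w (snd y) (fst x))
                (cd_mul w (snd x) (cd_conj w (fst y))))
  end.

Fixpoint cd_scal (v : nat) : R -> CD v -> CD v :=
  match v return R -> CD v -> CD v with
  | O => Rmult
  | S w => fun r x => (cd_scal w r (fst x), cd_scal w r (snd x))
  end.

Fixpoint cd_real (v : nat) : R -> CD v :=
  match v return R -> CD v with
  | O => fun r => r
  | S w => fun r => (cd_real w r, cd_scal w 0 (cd_real w 0))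
  end.

Definition cd_zero (v : nat) : CD v := cd_real v 0.

(* Re(z) = (z + conj z)/2 is real; with the doubling formula for conj,
   z + conj z has only its real coordinate nonzero, so Re(z) is the real
   (first) coordinate. *)

Fixpoint cd_Re (v : nat) : CD v -> R :=
  match v return CD v -> R with
  | O => fun x => x
  | S w => fun x => cd_Re w (fst x)
  end.

Definition cd_norm (v : nat) (z : CD v) : R := sqrt (cd_Re v (cd_mul v z (cd_conj v z))).

Definition cd_inner (v : nat) (x y : CD v) : R := cd_Re v (cd_mul v x (cd_conj v y)).

Definition imag (v : nat) (z : CD v) : Prop := cd_Re v z = 0.

Definition cd_exp (v : nat) (M : CD v) : CD v :=
  cd_add v (cd_real v (cos (cd_norm v M)))
           (cd_scal v (sin (cd_norm v M) / cd_norm v M) M).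

Definition anticomm (v : nat) (a b : CD v) : CD v :=
  cd_add v (cd_mul v a b) (cd_mul v b a).

From Stdlib Require Import Reals Lra Lia ZArith.
Open Scope R_scope.

(* For imaginary M, N one has MN + NM = -2 (M,N), so with a = |M|, b = |N|
   the anticommutator {e^M, e^N} is the real number
   2 (cos a cos b - sinc a sinc b (M,N)) plus the imaginary vector
   2 cos a sinc b N + 2 cos b sinc a M.  Pairing that vector with M and with N
   yields, together with the real part, a polynomial system in cos a, cos b,
   sinc a, sinc b and (M,N) whose only solutions have cos a = cos b = 0 and
   (M,N) = 0.  As M and N are then nonzero, (M,N) = 0 amounts to N_1 = 0,
   and also to M_1 = 0. *)

(* A_v is R^(2^v) as a vector space; linear identities are checked
   coordinatewise, the coordinates being indexed by [Idx v]. *)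
Fixpoint Idx (v : nat) : Type :=
  match v with O => unit | S w => (bool * Idx w)%type end.

Fixpoint coord (v : nat) : CD v -> Idx v -> R :=
  match v return CD v -> Idx v -> R with
  | O => fun x _ => x
  | S w => fun x i =>
      if fst i then coord w (fst x) (snd i) else coord w (snd x) (snd i)
  end.

Fixpoint re_idx (v : nat) : Idx v :=
  match v with O => tt | S w => (true, re_idx w) end.

Lemma coord_inj v : forall x y : CD v, (forall i, coord v x i = coord v y i) -> x = y.
Proof.
  induction v as [|w IH]; simpl; intros x y H.
  - exact (H tt).
  - destruct x as [x1 x2], y as [y1 y2]; f_equal; apply IH; intro i;
      [exact (H (true, i)) | exact (H (false, i))].
Qed.

Lemma coord_add v : forall x y i, coord v (cd_add v x y) i = coord v x i + coord v y i.
Proof. induction v; simpl; intros; [|destruct i as [[|] i]; simpl]; auto. Qed.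

Lemma coord_opp v : forall x i, coord v (cd_opp v x) i = - coord v x i.
Proof. induction v; simpl; intros; [|destruct i as [[|] i]; simpl]; auto. Qed.

Lemma coord_scal v : forall r x i, coord v (cd_scal v r x) i = r * coord v x i.
Proof. induction v; simpl; intros; [|destruct i as [[|] i]; simpl]; auto. Qed.

(* Folding the coordinates of 1 keeps [coord_real] from rewriting itself. *)
Definition one_coord (v : nat) (i : Idx v) : R := coord v (cd_real v 1) i.

Lemma coord_real v : forall r i, coord v (cd_real v r) i = r * one_coord v i.
Proof.
  unfold one_coord; induction v as [|w IH]; simpl; intros r i; [ring|].
  destruct i as [[|] i]; simpl; [apply IH | rewrite !coord_scal; ring].
Qed.

Lemma Re_coord v : forall x, cd_Re v x = coord v x (re_idx v).
Proof. induction v; simpl; auto. Qed.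

Lemma one_coord_re v : one_coord v (re_idx v) = 1.
Proof. unfold one_coord; induction v; simpl; auto. Qed.

Ltac cd_linear :=
  apply coord_inj; intro; unfold cd_zero;
  repeat rewrite ?coord_add, ?coord_opp, ?coord_scal, ?coord_real; ring.

Lemma Re_add v x y : cd_Re v (cd_add v x y) = cd_Re v x + cd_Re v y.
Proof. rewrite !Re_coord, coord_add; ring. Qed.

Lemma Re_opp v x : cd_Re v (cd_opp v x) = - cd_Re v x.
Proof. rewrite !Re_coord, coord_opp; ring. Qed.

Lemma Re_scal v r x : cd_Re v (cd_scal v r x) = r * cd_Re v x.
Proof. rewrite !Re_coord, coord_scal; ring. Qed.

Lemma Re_real v r : cd_Re v (cd_real v r) = r.
Proof. rewrite Re_coord, coord_real, one_coord_re; ring. Qed.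

Lemma conj_add v : forall x y,
  cd_conj v (cd_add v x y) = cd_add v (cd_conj v x) (cd_conj v y).
Proof. induction v; simpl; intros; [|destruct x, y; simpl; f_equal; rewrite ?IHv; cd_linear]; auto. Qed.

Lemma conj_opp v : forall x, cd_conj v (cd_opp v x) = cd_opp v (cd_conj v x).
Proof. induction v; simpl; intros; [|destruct x; simpl; f_equal; rewrite ?IHv; cd_linear]; auto. Qed.

Lemma conj_scal v : forall r x, cd_conj v (cd_scal v r x) = cd_scal v r (cd_conj v x).
Proof. induction v; simpl; intros; [|destruct x; simpl; f_equal; rewrite ?IHv; cd_linear]; auto. Qed.

Lemma conj_conj v : forall x, cd_conj v (cd_conj v x) = x.
Proof. induction v; simpl; intros; [|destruct x; simpl; f_equal; rewrite ?IHv; cd_linear]; auto. Qed.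

Lemma conj_real v : forall r, cd_conj v (cd_real v r) = cd_real v r.
Proof. induction v; simpl; intros; [|f_equal; rewrite ?IHv; cd_linear]; auto. Qed.

Lemma conj_imag v : forall x, imag v x -> cd_conj v x = cd_opp v x.
Proof. unfold imag; induction v; simpl; intros; [lra | destruct x; simpl in *; f_equal; auto]. Qed.

Lemma mul_add v :
  (forall x y z, cd_mul v (cd_add v x y) z = cd_add v (cd_mul v x z) (cd_mul v y z)) /\
  (forall x y z, cd_mul v x (cd_add v y z) = cd_add v (cd_mul v x y) (cd_mul v x z)).
Proof.
  induction v as [|w [IHl IHr]]; simpl; split; intros; try ring;
    destruct x, y, z; simpl; f_equal; rewrite ?conj_add, ?IHl, ?IHr; cd_linear.
Qed.
Definition mul_addl v := proj1 (mul_add v).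
Definition mul_addr v := proj2 (mul_add v).

Lemma mul_scal v :
  (forall r x y, cd_mul v (cd_scal v r x) y = cd_scal v r (cd_mul v x y)) /\
  (forall r x y, cd_mul v x (cd_scal v r y) = cd_scal v r (cd_mul v x y)).
Proof.
  induction v as [|w [IHl IHr]]; simpl; split; intros; try ring;
    destruct x, y; simpl; f_equal; rewrite ?conj_scal, ?IHl, ?IHr; cd_linear.
Qed.
Definition mul_scall v := proj1 (mul_scal v).
Definition mul_scalr v := proj2 (mul_scal v).

Lemma mul_oppl v x y : cd_mul v (cd_opp v x) y = cd_opp v (cd_mul v x y).
Proof.
  replace (cd_opp v x) with (cd_scal v (-1) x) by cd_linear.
  rewrite mul_scall; cd_linear.
Qed.

Lemma mul_oppr v x y : cd_mul v x (cd_opp v y) = cd_opp v (cd_mul v x y).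
Proof.
  replace (cd_opp v y) with (cd_scal v (-1) y) by cd_linear.
  rewrite mul_scalr; cd_linear.
Qed.

Lemma mul_real v :
  (forall r x, cd_mul v (cd_real v r) x = cd_scal v r x) /\
  (forall r x, cd_mul v x (cd_real v r) = cd_scal v r x).
Proof.
  induction v as [|w [IHl IHr]]; simpl; split; intros; try ring;
    destruct x; simpl; f_equal;
    rewrite ?conj_scal, ?conj_real, ?IHl, ?IHr, ?mul_scall, ?mul_scalr; cd_linear.
Qed.
Definition mul_reall v := proj1 (mul_real v).
Definition mul_realr v := proj2 (mul_real v).

Fixpoint dot (v : nat) : CD v -> CD v -> R :=
  match v return CD v -> CD v -> R with
  | O => Rmult
  | S w => fun x y => dot w (fst x) (fst y) + dot w (snd x) (snd y)
  end.

Lemma dot_sym v : forall x y, dot v x y = dot v y x.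
Proof. induction v; simpl; intros; [ring | rewrite !(IHv (fst x)), (IHv (snd x)); reflexivity]. Qed.

Lemma dot_addl v : forall x y z, dot v (cd_add v x y) z = dot v x z + dot v y z.
Proof. induction v; simpl; intros; [|rewrite !IHv]; ring. Qed.

Lemma dot_addr v x y z : dot v x (cd_add v y z) = dot v x y + dot v x z.
Proof. rewrite dot_sym, dot_addl, !(dot_sym v x); reflexivity. Qed.

Lemma dot_scall v : forall r x z, dot v (cd_scal v r x) z = r * dot v x z.
Proof. induction v; simpl; intros; [|rewrite !IHv]; ring. Qed.

Lemma dot_reall v : forall r x, dot v (cd_real v r) x = r * cd_Re v x.
Proof. induction v; simpl; intros; [|rewrite IHv, dot_scall]; ring. Qed.

Lemma dot_self_ge0 v : forall x, 0 <= dot v x x.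
Proof.
  induction v as [|w IH]; intros x; [apply Rle_0_sqr|].
  destruct x as [a b]; simpl; pose proof (IH a); pose proof (IH b); lra.
Qed.

Lemma dot_self_eq0 v : forall x, dot v x x = 0 -> x = cd_zero v.
Proof.
  induction v as [|w IH]; simpl; intros x H; [now destruct (Rmult_integral _ _ H)|].
  destruct x as [a b]; simpl in H.
  pose proof (dot_self_ge0 w a); pose proof (dot_self_ge0 w b).
  rewrite (IH a), (IH b) by lra; unfold cd_zero; simpl; f_equal; cd_linear.
Qed.

Lemma Re_mul_conj v :
  (forall x y, cd_Re v (cd_mul v x (cd_conj v y)) = dot v x y) /\
  (forall x y, cd_Re v (cd_mul v (cd_conj v x) y) = dot v x y).
Proof.
  induction v as [|w [IHr IHl]]; simpl; split; intros; try ring;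
    destruct x as [a b], y as [c d]; simpl;
    rewrite Re_add, !Re_opp, ?conj_opp, ?mul_oppl, ?mul_oppr, !Re_opp, ?IHr, !IHl,
      (dot_sym w d b); ring.
Qed.

Lemma inner_dot v x y : cd_inner v x y = dot v x y.
Proof. apply Re_mul_conj. Qed.

Lemma mul_conj_self v :
  (forall x, cd_mul v x (cd_conj v x) = cd_real v (dot v x x)) /\
  (forall x, cd_mul v (cd_conj v x) x = cd_real v (dot v x x)).
Proof.
  induction v as [|w [IHr IHl]]; simpl; split; intros; try ring;
    destruct x as [a b]; simpl; f_equal;
    rewrite ?conj_opp, ?conj_conj, ?mul_oppl, ?mul_oppr, ?IHr, ?IHl; cd_linear.
Qed.

Lemma norm_sqrt_dot v z : cd_norm v z = sqrt (dot v z z).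
Proof. unfold cd_norm; rewrite (proj1 (mul_conj_self v)), Re_real; reflexivity. Qed.

Lemma norm_ge0 v z : 0 <= cd_norm v z.
Proof. apply sqrt_pos. Qed.

Lemma norm_sqr v z : cd_norm v z * cd_norm v z = dot v z z.
Proof. rewrite norm_sqrt_dot; apply sqrt_sqrt, dot_self_ge0. Qed.

Lemma scal_eq0_of_orth v beta M N2 :
  dot v N2 M = 0 -> dot v (cd_add v (cd_scal v beta M) N2) M = 0 ->
  cd_scal v beta M = cd_zero v.
Proof.
  intros hN2 H; rewrite dot_addl, dot_scall, hN2, Rplus_0_r in H.
  destruct (Rmult_integral _ _ H) as [-> | hM]; [|rewrite (dot_self_eq0 v M hM)]; cd_linear.
Qed.

Lemma mul_imag_self v x : imag v x -> cd_mul v x x = cd_real v (- dot v x x).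
Proof.
  intro hx; pose proof (proj1 (mul_conj_self v) x) as H.
  rewrite conj_imag, mul_oppr in H by exact hx.
  replace (cd_mul v x x) with (cd_opp v (cd_opp v (cd_mul v x x))) by cd_linear.
  rewrite H; cd_linear.
Qed.

Lemma anticomm_imag v M N : imag v M -> imag v N ->
  anticomm v M N = cd_real v (-2 * dot v M N).
Proof.
  intros hM hN.
  assert (hMN : imag v (cd_add v M N)) by (unfold imag in *; rewrite Re_add, hM, hN; ring).
  replace (anticomm v M N) with
    (cd_add v (cd_mul v (cd_add v M N) (cd_add v M N))
              (cd_opp v (cd_add v (cd_mul v M M) (cd_mul v N N))))
    by (unfold anticomm; rewrite mul_addl, !mul_addr; cd_linear).
  rewrite !mul_imag_self, !dot_addl, !dot_addr, (dot_sym v N M) by assumption; cd_linear.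
Qed.

Lemma anticomm_real_add_scal v M N p q s t : imag v M -> imag v N ->
  anticomm v (cd_add v (cd_real v p) (cd_scal v s M))
             (cd_add v (cd_real v q) (cd_scal v t N))
  = cd_add v (cd_real v (2 * p * q - 2 * s * t * dot v M N))
             (cd_add v (cd_scal v (2 * p * t) N) (cd_scal v (2 * q * s) M)).
Proof.
  intros hM hN.
  transitivity
    (cd_add v (cd_add v (cd_real v (2 * p * q))
                        (cd_add v (cd_scal v (2 * p * t) N) (cd_scal v (2 * q * s) M)))
              (cd_scal v (s * t) (anticomm v M N))).
  - unfold anticomm.
    rewrite !mul_addl, !mul_addr, !mul_reall, !mul_realr, !mul_scall, !mul_scalr.
    cd_linear.
  - rewrite anticomm_imag by assumption; cd_linear.
Qed.

Definition sinc (x : R) : R := sin x / x.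

(* Division by zero yields 0 here, not the analytic limit 1. *)
Lemma sinc_0 : sinc 0 = 0.
Proof. unfold sinc; rewrite sin_0; unfold Rdiv; ring. Qed.

Lemma cos_neq0_of_sinc_eq0 x : sinc x = 0 -> cos x <> 0.
Proof.
  intros hs hc; pose proof (sin2_cos2 x) as H; unfold Rsqr in H.
  assert (hsin : sin x = 0).
  { destruct (Req_dec x 0) as [-> | hx]; [apply sin_0|].
    unfold sinc, Rdiv in hs; destruct (Rmult_integral _ _ hs) as [? | hinv]; auto.
    now apply Rinv_neq_0_compat in hx. }
  rewrite hsin, hc in H; lra.
Qed.

Lemma cos_eq0_neq0 x : cos x = 0 -> x <> 0.
Proof. intros hc ->; rewrite cos_0 in hc; lra. Qed.

(* The real part of {e^M, e^N} and its pairings with M and N, for a = |M|,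
   b = |N| and c = (M,N). *)
Lemma cos_cos_eq0_of_exp_system a b c :
  cos a * cos b = sinc a * sinc b * c ->
  cos a * sinc b * c + cos b * sinc a * (a * a) = 0 ->
  cos a * sinc b * (b * b) + cos b * sinc a * c = 0 ->
  cos a = 0 /\ cos b = 0 /\ c = 0.
Proof.
  intros E1 E2 E3.
  assert (hq : cos b = 0).
  { destruct (Req_dec (sinc a) 0) as [hs | hs].
    - pose proof (cos_neq0_of_sinc_eq0 a hs); rewrite hs in E1.
      destruct (Rmult_integral (cos a) (cos b)); [lra | contradiction | assumption].
    - assert (ha : a <> 0) by (intros ->; apply hs, sinc_0).
      assert (H : sinc a * ((sinc b * c) ^ 2 + (cos b * a) ^ 2) = 0).
      { transitivity (cos b * (cos a * sinc b * c + cos b * sinc a * (a * a))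
                      - sinc b * c * (cos a * cos b - sinc a * sinc b * c)); [ring|].
        rewrite E2, E1; ring. }
      destruct (Rmult_integral _ _ H) as [? | hsum]; [contradiction|].
      assert (cos b * a = 0) by nra.
      destruct (Rmult_integral (cos b) a); [assumption | assumption | contradiction]. }
  assert (ht : sinc b <> 0) by (intro hs; exact (cos_neq0_of_sinc_eq0 b hs hq)).
  assert (hb : b <> 0) by (apply cos_eq0_neq0; exact hq).
  rewrite hq in E1, E2, E3.
  assert (hc : c = 0).
  { destruct (Req_dec c 0) as [| hc]; [assumption | exfalso].
    assert (htc : sinc b * c <> 0) by now apply Rmult_integral_contrapositive_currified.
    assert (hs : sinc a = 0) by (apply (Rmult_eq_reg_r (sinc b * c)); lra).
    apply (cos_neq0_of_sinc_eq0 a hs), (Rmult_eq_reg_r (sinc b * c)); lra. }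
  subst c; repeat split; auto.
  apply (Rmult_eq_reg_r (sinc b * (b * b))); [lra|].
  apply Rmult_integral_contrapositive_currified; [exact ht|].
  now apply Rmult_integral_contrapositive_currified.
Qed.

Lemma cos_eq0_nonneg x : 0 <= x ->
  cos x = 0 <-> exists k : nat, x = PI / 2 + PI * INR k.
Proof.
  intros hx; split.
  - intros h; destruct (cos_eq_0_0 x h) as [k hk].
    assert (hk0 : (0 <= k)%Z).
    { destruct (Z_lt_le_dec k 0) as [hl|]; auto; exfalso.
      assert (IZR k <= -1) by (apply IZR_le; lia).
      pose proof PI_RGT_0; nra. }
    exists (Z.to_nat k); rewrite INR_IZR_INZ, Z2Nat.id by exact hk0; lra.
  - intros [k ->]; apply cos_eq_0_1; exists (Z.of_nat k).
    rewrite <- INR_IZR_INZ; ring.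
Qed.

Lemma anticomm_exp_eq0 v M N : imag v M -> imag v N ->
  anticomm v (cd_exp v M) (cd_exp v N) = cd_zero v <->
  cos (cd_norm v M) = 0 /\ cos (cd_norm v N) = 0 /\ dot v M N = 0.
Proof.
  intros hM hN; unfold cd_exp; fold (sinc (cd_norm v M)) (sinc (cd_norm v N)).
  rewrite anticomm_real_add_scal by assumption.
  split.
  - intro H.
    pose proof (f_equal (cd_Re v) H) as HRe.
    pose proof (f_equal (fun z => dot v z M) H) as HdM.
    pose proof (f_equal (fun z => dot v z N) H) as HdN.
    unfold imag, cd_zero in *; simpl in HRe, HdM, HdN.
    rewrite !Re_add, !Re_scal, !Re_real, hM, hN in HRe.
    rewrite !dot_addl, !dot_scall, !dot_reall, hM, <- norm_sqr, (dot_sym v N M) in HdM.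
    rewrite !dot_addl, !dot_scall, !dot_reall, hN, <- norm_sqr in HdN.
    apply cos_cos_eq0_of_exp_system; lra.
  - intros (ha & hb & hc); rewrite ha, hb, hc; cd_linear.
Qed.

Theorem corollary13 (v : nat) (Hv : (2 <= v)%nat) (M N : CD v)
  (HM : imag v M) (HN : imag v N)
  (alpha beta : R) (N1 N2 M1 M2 : CD v)
  (HNdec : N = cd_add v N1 N2) (HN1 : N1 = cd_scal v beta M)
  (HN2 : cd_inner v N2 M = 0)
  (HMdec : M = cd_add v M1 M2) (HM1 : M1 = cd_scal v alpha N)
  (HM2 : cd_inner v M2 N = 0) :
  anticomm v (cd_exp v M) (cd_exp v N) = cd_zero v <->
  exists l k : nat,
    (cd_norm v N2 = PI / 2 + PI * INR l /\ N1 = cd_zero v /\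
     cd_norm v M = PI / 2 + PI * INR k)
    \/
    (cd_norm v M2 = PI / 2 + PI * INR k /\ M1 = cd_zero v /\
     cd_norm v N = PI / 2 + PI * INR l).
Proof.
  rewrite inner_dot in HN2, HM2.
  rewrite anticomm_exp_eq0 by assumption.
  split.
  - intros (hcM & hcN & hMN).
    destruct (proj1 (cos_eq0_nonneg _ (norm_ge0 v M)) hcM) as [k hk].
    destruct (proj1 (cos_eq0_nonneg _ (norm_ge0 v N)) hcN) as [l hl].
    assert (hN1 : N1 = cd_zero v).
    { rewrite HN1; apply scal_eq0_of_orth with N2; [exact HN2|].
      rewrite <- HN1, <- HNdec, dot_sym; exact hMN. }
    assert (N2 = N) by (rewrite HNdec, hN1; cd_linear); subst N2.
    exists l, k; left; auto.
  - intros (l & k & [(hN2 & hN1 & hM) | (hM2 & hM1 & hN)]).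
    + assert (N2 = N) by (rewrite HNdec, hN1; cd_linear); subst N2.
      rewrite dot_sym; repeat split; [| |exact HN2];
        apply cos_eq0_nonneg; eauto using norm_ge0.
    + assert (M2 = M) by (rewrite HMdec, hM1; cd_linear); subst M2.
      repeat split; [| |exact HM2];
        apply cos_eq0_nonneg; eauto using norm_ge0.
Qed.
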